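(* Let $d\geq 3$, $k\geq 1$ and $n=kd-2$. Then $\rho_n(d)(\Delta^2)$ acts on $A^n$ as multiplication by a scalar $\lambda\in A$ with $\lambda\neq 1$.
   Context: In the braid group $B_{n+1}$ with generators $s_1,\dots,s_n$, set $\Delta=(s_1s_2\cdots s_n)(s_1\cdots s_{n-1})\cdots(s_1s_2)(s_1)$. Then $\Delta^2$ is central in $B_{n+1}$. $A=\mathbb{Z}[q,q^{-1}]/(\Phi_d(q))$, where $\Phi_d$ is the $d$-th cyclotomic polynomial. $\rho_n(d):B_{n+1}\to GL_n(A)$ is the reduced Burau representation reduced mod $\Phi_d(q)$. It sends the generator $s_j$ to $T_j$, where $T_j(e_j)=-qe_j$, $T_j(e_{j-1})=e_{j-1}+qe_j$, $T_j(e_{j+1})=e_{j+1}+e_j$, and $T_j(e_k)=e_k$ for $|k-j|\geq 2$, with $e_1,\dots,e_n$ the standard basis. *)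

From HB Require Import structures.
From mathcomp Require Import all_boot all_order all_algebra all_field.
Set Implicit Arguments. Unset Strict Implicit. Unset Printing Implicit Defensive.
Import GRing.Theory.
Local Open Scope ring_scope.

(* The ring A = Z[q,q^{-1}]/(Phi_d(q)) is represented concretely:
   an element of A is represented by an integer polynomial in q
   (q is invertible modulo Phi_d, so Z[q]/(Phi_d) = Z[q,q^-1]/(Phi_d)),
   and equality in A is congruence modulo the integral cyclotomic
   polynomial 'Phi_d = Cyclotomic d : {poly int}. *)
Definition eqA (d : nat) (a b : {poly int}) : Prop :=
  exists r : {poly int}, a - b = r * Cyclotomic d.

(* Reduced Burau matrix T_j (1 <= j <= n), acting on column vectors
   with standard basis e_1..e_n (index i : 'I_n stands for e_(i+1)):
   column k of T_j is T_j(e_k).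
   T_j e_j = -q e_j, T_j e_(j-1) = e_(j-1) + q e_j,
   T_j e_(j+1) = e_(j+1) + e_j, T_j e_k = e_k otherwise. *)
Definition burauT (n j : nat) : 'M[{poly int}]_n :=
  \matrix_(i < n, k < n)
    if k.+1 == j then (if i.+1 == j then - 'X else 0)
    else if i.+1 == j then
      (if k.+1 == j.-1 then 'X else if k.+1 == j.+1 then 1 else 0)
    else (if i == k then 1 else 0).

Definition burau_word (n : nat) (w : seq nat) : 'M[{poly int}]_n :=
  foldr (fun j M => burauT n j *m M) 1%:M w.

(* Delta = (s_1 ... s_n)(s_1 ... s_(n-1)) ... (s_1 s_2)(s_1) in B_(n+1). *)
Definition Delta_word (n : nat) : seq nat :=
  flatten [seq iota 1 (n - i) | i <- iota 0 n].

Definition Delta2_word (n : nat) : seq nat := Delta_word n ++ Delta_word n.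

From HB Require Import structures.
From mathcomp Require Import all_boot all_order all_algebra all_field.
From mathcomp Require Import ring zify.
Import GRing.Theory.
Local Open Scope ring_scope.

(* Over Z[q] itself (before reducing mod Phi_d) the reduced
   Burau image of Delta^2 in B_(n+1) is exactly the scalar matrix q^(n+1).
   To see this we let braids act on coordinate sequences f : nat -> R, where
   f 1, ..., f n are the coordinates of a vector and f 0 = f (n+1) = 0 are
   padding: T_j only changes coordinate j, into q f(j-1) - q f j + f(j+1).
   On such sequences the word s_1 ... s_m, then Delta, and finally Delta^2
   have closed forms (Delta acts as f i |-> -q^i f(n+1-i), an "anti-diagonal"
   map, whose square is q^(n+1)).  Finally q^m = 1 mod Phi_d forces d | m
   (evaluate at a primitive d-th root of unity); for n = kd - 2 we have
   d | n + 2, so q^(n+1) = 1 mod Phi_d would give d | 1, impossible. *)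

Section CoordinateAction.

Variables (R : comPzRingType) (q : R).

Definition coord_step (j : nat) (f : nat -> R) : nat -> R :=
  fun i => if i == j then q * f j.-1 - q * f j + f j.+1 else f i.

Definition coord_word (w : seq nat) (f : nat -> R) : nat -> R :=
  foldr coord_step f w.

Lemma coord_step_ext j f g : f =1 g -> coord_step j f =1 coord_step j g.
Proof. by move=> fg i; rewrite /coord_step !fg. Qed.

Lemma coord_word_cat a b f :
  coord_word (a ++ b) f = coord_word a (coord_word b f).
Proof. by rewrite /coord_word foldr_cat. Qed.

Lemma coord_word_iota m f i : coord_word (iota 1 m) f i =
  if (0 < i <= m)%N then q * f i.-1 - q * f m + f m.+1 else f i.
Proof.
elim: m f i => [|m IH] f i; first by rewrite /=; case: i.
have -> : iota 1 m.+1 = iota 1 m ++ [:: m.+1].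
  by rewrite -[m.+1]addn1 iotaD add1n addn1.
rewrite coord_word_cat IH /= /coord_step.
case: i => [|i] //=; case: (ltngtP i m) => him.
- have -> : (i == m.+1) = false by lia.
  have -> : (m == m.+1) = false by lia.
  by rewrite ltnW // eqxx; ring.
- have -> : (i.+1 == m.+1) = false by lia.
  by have -> : (i < m.+1)%N = false by lia.
- by rewrite him eqxx ltnSn.
Qed.

Lemma Delta_wordS m : Delta_word m.+1 = iota 1 m.+1 ++ Delta_word m.
Proof.
rewrite /Delta_word /=; congr (_ :: _); congr (_ ++ _).
by rewrite (iotaDl 1 0) -map_comp.
Qed.

Lemma coord_Delta m f : f 0%N = 0 -> forall i, coord_word (Delta_word m) f i =
  if (0 < i <= m)%N then - q ^+ i * f (m.+1 - i)%N + f m.+1 else f i.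
Proof.
move=> f0; elim: m => [|m IH] i; first by rewrite /=; case: i.
rewrite Delta_wordS coord_word_cat coord_word_iota !IH.
have -> : (0 < m.+1 <= m)%N = false by lia.
have -> : (0 < m.+2 <= m)%N = false by lia.
case: i => [|[|i]] //=; first by rewrite f0 subn1; ring.
case: (ltnP i m) => him.
- have -> : (i.+1 < m.+1)%N by lia.
  by rewrite !subSS (exprS _ i.+1); ring.
- have -> : (i.+1 < m.+1)%N = false by lia.
  by have -> : (i.+1 < m)%N = false by lia.
Qed.

Lemma coord_Delta2 n f : f 0%N = 0 -> f n.+1 = 0 ->
  forall i, (0 < i <= n)%N -> coord_word (Delta2_word n) f i = q ^+ n.+1 * f i.
Proof.
move=> f0 fn i hi.
have Df0 : coord_word (Delta_word n) f 0%N = 0 by rewrite coord_Delta.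
rewrite /Delta2_word coord_word_cat (coord_Delta _ _ Df0) hi !coord_Delta // fn.
have -> : (0 < n.+1 - i <= n)%N by lia.
have -> : (0 < n.+1 <= n)%N = false by lia.
rewrite subKn; last by lia.
rewrite !addr0 !mulNr !mulrN opprK mulrA -exprD; congr (_ ^+ _ * _); lia.
Qed.

End CoordinateAction.

Arguments coord_step {R}.
Arguments coord_word {R}.

Notation Zq := {poly int}.

Definition pad n (v : 'cV[Zq]_n) (i : nat) : Zq :=
  \sum_(k < n) (if k.+1 == i then v k 0 else 0).

Arguments pad {n}.

Lemma pad_ord n (v : 'cV[Zq]_n) (i : 'I_n) : pad v i.+1 = v i 0.
Proof.
rewrite /pad (bigD1 i) //= eqxx big1 ?addr0 // => k ki.
by rewrite eqSS val_eqE (negbTE ki).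
Qed.

Lemma pad_out n (v : 'cV[Zq]_n) i : (i == 0)%N || (n < i)%N -> pad v i = 0.
Proof.
move=> hi; rewrite /pad big1 // => k _.
by have -> : (k.+1 == i) = false by case: k => k /= kn; lia.
Qed.

Lemma burauT_row_id n j (i : 'I_n) (v : 'cV[Zq]_n) :
  i.+1 != j -> (burauT n j *m v) i 0 = v i 0.
Proof.
move=> /negbTE nij; rewrite mxE (bigD1 i) //= !mxE nij eqxx mul1r.
rewrite big1 ?addr0 // => k ki; rewrite !mxE nij.
case: ifP => _; first by rewrite mul0r.
by rewrite eq_sym (negbTE ki) mul0r.
Qed.

Lemma burauT_row_j n (i : 'I_n) (v : 'cV[Zq]_n) :
  (burauT n i.+1 *m v) i 0 =
    'X * pad v i - 'X * pad v i.+1 + pad v i.+2.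
Proof.
rewrite mxE /pad !mulr_sumr -sumrB -big_split /=; apply: eq_bigr => k _.
rewrite !mxE eqxx.
case: (k.+1 =P i.+1) => [e1|n1]; case: (k.+1 =P i.+1.-1) => [e2|n2];
  case: (k.+1 =P i.+2) => [e3|n3]; try (exfalso; lia); ring.
Qed.

Lemma pad_burauT n j (v : 'cV[Zq]_n) : (0 < j <= n)%N ->
  pad (burauT n j *m v) =1 coord_step 'X j (pad v).
Proof.
move=> hj i; rewrite /coord_step.
case: (boolP ((i == 0)%N || (n < i)%N)) => hi.
  have -> : (i == j) = false by lia.
  by rewrite !pad_out.
have ilt : (i.-1 < n)%N by lia.
have -> : i = (Ordinal ilt).+1 by rewrite /=; lia.
rewrite !pad_ord; case: eqP => [ej|/eqP nej]; last exact: burauT_row_id.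
by rewrite -ej burauT_row_j.
Qed.

Lemma pad_burau_word n w (v : 'cV[Zq]_n) : all (fun j => 0 < j <= n)%N w ->
  pad (burau_word n w *m v) =1 coord_word 'X w (pad v).
Proof.
elim: w => [|j w IH] /=; first by rewrite /burau_word mul1mx.
move=> /andP[hj hw] i; rewrite -mulmxA pad_burauT //.
by apply: coord_step_ext; apply: IH.
Qed.

Lemma Delta_word_letters m : all (fun j => 0 < j <= m)%N (Delta_word m).
Proof.
elim: m => [|m IH] //; apply/allP => j.
by rewrite Delta_wordS mem_cat mem_iota => /orP[|/(allP IH)]; lia.
Qed.

Lemma burau_Delta2 n (i j : 'I_n) :
  burau_word n (Delta2_word n) i j = 'X ^+ n.+1 * (i == j)%:R.
Proof.
have letters : all (fun l => 0 < l <= n)%N (Delta2_word n).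
  by rewrite all_cat Delta_word_letters.
have -> : burau_word n (Delta2_word n) i j =
    pad (burau_word n (Delta2_word n) *m (delta_mx j 0 : 'cV[Zq]_n)) i.+1.
  by rewrite pad_ord -colE mxE.
rewrite pad_burau_word // coord_Delta2.
- by rewrite pad_ord mxE eqxx andbT.
- exact: pad_out.
- by rewrite pad_out // ltnSn orbT.
- by rewrite ltn_ord.
Qed.

Lemma eqA_eval_prim_root {d} {z : algC} {a b : Zq} : d.-primitive_root z ->
  eqA d a b -> (map_poly intr a).[z] = (map_poly intr b).[z] :> algC.
Proof.
move=> pz [r hab]; apply/eqP; rewrite -subr_eq0 -hornerN -hornerD -rmorphB /= hab.
rewrite rmorphM /= (Cintr_Cyclotomic pz) hornerM.
have -> : (cyclotomic z d).[z] = 0 by apply/rootP; rewrite root_cyclotomic.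
by rewrite mulr0.
Qed.

Lemma Xn_eqA_1 {d m} : (0 < d)%N -> eqA d ('X ^+ m) 1 -> (d %| m)%N.
Proof.
move=> d_gt0; have [z pz] := C_prim_root_exists d_gt0.
move=> /(eqA_eval_prim_root pz).
rewrite rmorphXn rmorph1 /= map_polyX hornerXn hornerC => zm.
by rewrite (prim_order_dvd pz) zm.
Qed.

Theorem lemma4p5 (d k : nat) (hd : (3 <= d)%N) (hk : (1 <= k)%N) :
  exists lambda : {poly int},
    (forall i j : 'I_(k * d - 2),
        eqA d (burau_word (k * d - 2) (Delta2_word (k * d - 2)) i j)
              (if i == j then lambda else 0))
    /\ ~ eqA d lambda 1.
Proof.
set n := (k * d - 2)%N.
exists ('X ^+ n.+1); split.
  move=> i j; exists 0; rewrite mul0r burau_Delta2.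
  by case: (i == j); rewrite ?mulr1 ?mulr0 subrr.
move=> /(Xn_eqA_1 (ltnW (ltnW hd))) dvd_n1.
have dvd_n2 : (d %| n.+2)%N.
  have -> : n.+2 = (k * d)%N by rewrite /n; nia.
  exact: dvdn_mull.
have : (d %| 1)%N by rewrite -(dvdn_addr 1 dvd_n1) addn1.
by rewrite dvdn1; lia.
Qed.
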